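(* $\displaystyle\lim_{m\to\infty} csd(\mathbb{Z}_2\times Q_{2^{m+1}})=0.$
   Context: For a finite group $G$, $L_1(G)$ is the set of cyclic subgroups of $G$ and $csd(G)=\frac{1}{|L_1(G)|^2}|\{(H,K)\in L_1(G)^2: HK=KH\}|$. $Q_{2^{m+1}}=\langle x,y\mid x^{2^m}=e,\ y^2=x^{2^{m-1}},\ y^{-1}xy=x^{-1}\rangle$ is the generalized quaternion group of order $2^{m+1}$ ($m\geq 2$). *)

From HB Require Import structures.
From mathcomp Require Import all_boot all_order all_algebra all_fingroup all_solvable.
Set Implicit Arguments. Unset Strict Implicit. Unset Printing Implicit Defensive.
Import GRing.Theory.
Local Open Scope group_scope.

Definition cyclic_subgroups (gT : finGroupType) : {set {set gT}} :=
  [set H : {set gT} | group_set H && cyclic H].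

Definition csd (gT : finGroupType) : rat :=
  (#|[set HK in setX (cyclic_subgroups gT) (cyclic_subgroups gT)
      | (HK.1 * HK.2 == HK.2 * HK.1)%g]|%:R / (#|cyclic_subgroups gT| ^ 2)%:R)%R.

(* Z_2 x Q_{2^(m+1)}: external direct product; Z_2 is the additive cyclic
   group 'I_2 (= 'Z_2), Q_{2^(m+1)} is mathcomp's generalized quaternion
   group of order 2^(m+1). *)
Definition Z2xQ (m : nat) : finGroupType := ('I_2 * 'Q_(2 ^ m.+1))%type.

(* Let A = Z_2 x <x>, where <x> is the cyclic subgroup of index 2 in
   Q_{2^(m+1)}; every element outside A has order dividing 4.  If two cyclic
   subgroups permute, either one of them lies in A, and A = Z_2 x C_{2^m} has
   only O(m) cyclic subgroups, or they are <g> and <h> with g, h outside A.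
   In the latter case <g><h> is a group of order dividing 16, so g^-1 h lies
   in A and has order dividing 16, which leaves at most 32 choices of h for
   each g.  Each cyclic subgroup has at most two generators outside A, so
   |L_1| >= |G \ A| / 2 = 2^m and csd <= (4m + 68) / 2^m. *)

From mathcomp Require Import all_boot all_order all_algebra all_fingroup all_solvable.
From mathcomp Require Import zify.
Import GRing.Theory Num.Theory Order.TTheory.
Set Implicit Arguments. Unset Strict Implicit. Unset Printing Implicit Defensive.
Local Open Scope group_scope.

Lemma leq_imset_card_factor (aT rT sT : finType) (f : aT -> rT) (g : aT -> sT)
    (D : {pred aT}) :
  {in D &, forall x y, g x = g y -> f x = f y} -> #|f @: D| <= #|g @: D|.
Proof.
move=> gf; pose gf_pair x := (g x, f x).
have -> : f @: D = snd @: (gf_pair @: D) by rewrite -imset_comp.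
have -> : g @: D = fst @: (gf_pair @: D) by rewrite -imset_comp.
rewrite (card_in_imset (f := fst)) ?leq_imset_card //.
move=> _ _ /imsetP[x Dx ->] /imsetP[y Dy ->] /= gxy.
by rewrite /gf_pair gxy (gf x y).
Qed.

Lemma sqr_leq_exp2 n : 4 <= n -> n * n <= 2 ^ n.
Proof.
elim: n => // n IHn n_ge4; have [-> //|n_ne3] := eqVneq n 3.
by have := IHn ltac:(lia); rewrite expnS; nia.
Qed.

Lemma affine_div_exp2_lt (R : archiFieldType) (a b : nat) (eps : R) :
  (0 < eps)%R -> exists N, forall n, N <= n -> ((a * n + b)%:R / (2 ^ n)%:R < eps)%R.
Proof.
move=> eps_gt0; pose k := Num.Def.archi_bound eps^-1.
have epsVk : (eps^-1 < k%:R)%R by rewrite archi_boundP // invr_ge0 ltW.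
have k_gt0 : (0 < k%:R :> R)%R by rewrite (lt_trans _ epsVk) ?invr_gt0.
exists ((a + b) * k).+4 => n n_ge.
have ab_lt : (a * n + b) * k < 2 ^ n.
  by apply: leq_trans (sqr_leq_exp2 (_ : 4 <= n)); nia.
rewrite ltr_pdivrMr ?ltr0n ?expn_gt0 //.
rewrite -(ltr_pM2r k_gt0) -natrM.
apply: lt_le_trans (_ : (2 ^ n)%:R <= _)%R; first by rewrite ltr_nat.
rewrite mulrAC -[X in (X <= _)%R]mul1r ler_pM2r ?ltr0n ?expn_gt0 //.
by rewrite -(ltr_pM2l eps_gt0) mulfV ?gt_eqF // in epsVk; apply: ltW.
Qed.

Definition cycles (gT : finGroupType) (D : {set gT}) : {set {set gT}} :=
  [set <[x]> | x in D].

Definition permuting_pairs (gT : finGroupType) : {set {set gT} * {set gT}} :=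
  [set HK in setX (cyclic_subgroups gT) (cyclic_subgroups gT)
     | HK.1 * HK.2 == HK.2 * HK.1].

Definition permuting_generators (gT : finGroupType) (D : {set gT}) : {set gT * gT} :=
  [set gh in setX D D | <[gh.1]> * <[gh.2]> == <[gh.2]> * <[gh.1]>].

Lemma csdE (gT : finGroupType) :
  csd gT = (#|permuting_pairs gT|%:R / (#|cyclic_subgroups gT| ^ 2)%:R)%R.
Proof. by []. Qed.

Lemma cyclic_subgroupsE (gT : finGroupType) : cyclic_subgroups gT = cycles [set: gT].
Proof.
apply/setP=> H; rewrite inE; apply/andP/imsetP => [[_ /cyclicP[x ->]]|[x _ ->]].
  by exists x; rewrite ?inE.
by rewrite cycle_cyclic groupP.
Qed.

Lemma cyclic_subgroups_gt0 (gT : finGroupType) : 0 < #|cyclic_subgroups gT|.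
Proof.
by apply/card_gt0P; exists <[1 : gT]>; rewrite cyclic_subgroupsE imset_f ?inE.
Qed.

Lemma mulg_index2 (gT : finGroupType) (G H : {group gT}) x y :
  H \subset G -> #|G : H| = 2 -> x \in G :\: H -> y \in G :\: H -> x * y \in H.
Proof.
move=> sHG iGH GHx /setDP[Gy notHy].
have GHy' : y^-1 \in G :\: H by rewrite !inE !groupV Gy notHy.
by rewrite -[y]invgK -mem_rcoset (rcoset_index2 sHG iGH GHy').
Qed.

Lemma order_dvd_permuting_cycles (gT : finGroupType) (g h : gT) :
  <[g]> * <[h]> = <[h]> * <[g]> -> #[g^-1 * h] %| #[g] * #[h].
Proof.
move=> perm_gh; have gh_group : group_set (<[g]> * <[h]>) by apply/comm_group_setP.
have gh_in : g^-1 * h \in Group gh_group by rewrite mem_mulg ?groupV ?cycle_id.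
apply: dvdn_trans (order_dvdG gh_in) _.
by rewrite !orderE mul_cardG dvdn_mulr.
Qed.

Lemma totient_dvd4 n : n %| 4 -> totient n <= 2.
Proof. by case/(@dvdn_pfactor 2 n 2 isT) => -[|[|[|]]] // _ ->. Qed.

Section IndexTwoExponentFour.

Variables (gT : finGroupType) (A : {group gT}).
Hypotheses (indexA : #|[set: gT] : A| = 2) (expA' : {in ~: A, forall x, x ^+ 4 = 1}).

Local Notation L := (cyclic_subgroups gT).

Lemma card_setC_index2 : #|~: A| <= 2 * #|L|.
Proof.
apply: (@leq_trans (2 * #|cycles (~: A)|)); last first.
  by rewrite leq_mul2l cyclic_subgroupsE subset_leq_card ?imsetS ?subsetT.
rewrite -sum1_card (partition_big_imset (fun x => <[x]>)) /= mulnC -sum_nat_const.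
apply: leq_sum => _ /imsetP[g Ag ->]; rewrite sum1dep_card.
apply: (@leq_trans #|[set x | generator <[g]> x]|).
  apply/subset_leq_card/subsetP => x; rewrite !inE => /andP[_ /eqP gx].
  by rewrite /generator gx.
by rewrite -totient_gen totient_dvd4 // order_dvdn expA'.
Qed.

Lemma permuting_cycles_Ldiv g h : g \in ~: A -> h \in ~: A ->
  <[g]> * <[h]> = <[h]> * <[g]> -> g^-1 * h \in 'Ldiv_16(A).
Proof.
move=> A'g A'h perm_gh; apply/LdivP; split.
  apply: (mulg_index2 (G := [set: gT]%G)); rewrite ?subsetT ?setTD //.
  by rewrite in_setC groupV -in_setC.
apply/eqP; rewrite -order_dvdn.
apply: dvdn_trans (order_dvd_permuting_cycles perm_gh) _.
by rewrite (_ : 16 = 4 * 4)%N // dvdn_mul // order_dvdn expA'.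
Qed.

Lemma card_permuting_generators_index2 :
  #|permuting_generators (~: A)| <= #|~: A| * #|'Ldiv_16(A)|.
Proof.
rewrite -cardsX; apply: leq_trans (leq_imset_card (fun gw => (gw.1, gw.1 * gw.2)) _).
apply/subset_leq_card/subsetP => -[g h] /setIdP[/setXP[A'g A'h] /eqP perm_gh].
apply/imsetP; exists (g, g^-1 * h); last by rewrite /= mulKVg.
by rewrite inE A'g permuting_cycles_Ldiv.
Qed.

Lemma card_permuting_pairs_index2 :
  #|permuting_pairs gT| <= 2 * #|cycles A| * #|L| + #|~: A| * #|'Ldiv_16(A)|.
Proof.
pose pair_cycles (gh : gT * gT) := (<[gh.1]>, <[gh.2]>).
have split_pairs : permuting_pairs gT \subset
    (setX (cycles A) L :|: setX L (cycles A))
      :|: pair_cycles @: permuting_generators (~: A).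
  apply/subsetP => -[H K] /setIdP[/setXP[LH LK] /eqP perm_HK].
  rewrite !in_setU !in_setX LH LK andbT /=.
  move: LH LK perm_HK; rewrite !cyclic_subgroupsE /cycles /=.
  move=> /imsetP[g _ ->] /imsetP[h _ ->] perm_gh.
  have [Ag|A'g] := boolP (g \in A); first by rewrite (imset_f _ Ag).
  have [Ah|A'h] := boolP (h \in A); first by rewrite (imset_f _ Ah) orbT.
  apply/orP; right; apply/imsetP; exists (g, h) => //.
  by rewrite inE /= perm_gh eqxx andbT in_setX !in_setC A'g A'h.
apply: leq_trans (subset_leq_card split_pairs) _.
apply: leq_trans (leq_card_setU _ _) (leq_add _ _); last first.
  exact: leq_trans (leq_imset_card _ _) card_permuting_generators_index2.
apply: leq_trans (leq_card_setU _ _) _.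
by rewrite !cardsX mulnC -mulnA mul2n -addnn leq_add // mulnC.
Qed.

Lemma permuting_pairs_index2_bound :
  #|permuting_pairs gT| * #|~: A| <= 4 * (#|cycles A| + #|'Ldiv_16(A)|) * #|L| ^ 2.
Proof.
have := card_permuting_pairs_index2; have := card_setC_index2.
set b := #|~: A|; set l := #|L|; set n := #|cycles A|.
set w := #|'Ldiv_16(A)| => b_le P_le.
apply: leq_trans (leq_mul P_le (leqnn b)) _.
have := leq_mul (leqnn (2 * n * l)) b_le; have := leq_mul (leqnn w) (leq_mul b_le b_le).
nia.
Qed.

End IndexTwoExponentFour.

Lemma expg_pair (aT rT : finGroupType) (a : aT) (r : rT) n :
  (a, r) ^+ n = (a ^+ n, r ^+ n).
Proof. by elim: n => // n IHn; rewrite !expgS IHn. Qed.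

Lemma expg_ord2 (e : 'I_2) : e ^+ 2 = 1.
Proof. by rewrite -[2]card_ord -cardsT expg_cardG ?inE. Qed.

Lemma expg_ord2_odd (e : 'I_2) s : odd s -> e ^+ s = e.
Proof. by move=> odd_s; rewrite -(expg_mod _ (expg_ord2 e)) modn2 odd_s. Qed.

Lemma cycle_eq_odd_exponent (gT : finGroupType) (u v : gT) :
  <[u]> = <[v]> -> exists2 s, odd s & v = u ^+ s.
Proof.
move=> uv; have /cycleP[s def_v] : v \in <[u]> by rewrite uv cycle_id.
rewrite def_v in uv *.
have [odd_s|even_s] := boolP (odd s); first by exists s.
have : coprime #[u] s by rewrite -generator_coprime /generator uv.
move/(coprime_dvdr (_ : 2 %| s)); rewrite coprimen2 dvdn2 even_s => /(_ isT) odd_u.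
by exists (s + #[u]); rewrite ?oddD ?odd_u ?(negPf even_s) // expgD expg_order mulg1.
Qed.

Lemma cycle_pair_ord2 (gT : finGroupType) (e : 'I_2) (u v : gT) :
  <[u]> = <[v]> -> <[(e, u)]> = <[(e, v)]>.
Proof.
suff sub (x y : gT) : <[x]> = <[y]> -> (e, y) \in <[(e, x)]>.
  by move=> uv; apply/eqP; rewrite eqEsubset !cycle_subG !sub.
move=> /cycle_eq_odd_exponent[s odd_s ->].
by rewrite -{1}(expg_ord2_odd e odd_s) -expg_pair mem_cycle.
Qed.

Lemma card_cycles_setX_ord2 (gT : finGroupType) (X : {set gT}) :
  #|cycles (setX [set: 'I_2] X)| <= 2 * #|cycles X|.
Proof.
have -> : (2 * #|cycles X| = #|setX [set: 'I_2] (cycles X)|)%N.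
  by rewrite cardsX cardsT card_ord.
apply: leq_trans (leq_imset_card_factor (g := fun c => (c.1, <[c.2]>)) _) _.
  by move=> [e u] [e' v] _ _ /= [<- uv]; apply: cycle_pair_ord2.
apply/subset_leq_card/subsetP => _ /imsetP[[e u] /setXP[_ Xu] ->].
by rewrite in_setX inE imset_f.
Qed.

Lemma card_Ldiv_setX_ord2 (gT : finGroupType) (X : {set gT}) n :
  #|'Ldiv_n(setX [set: 'I_2] X)| <= 2 * #|'Ldiv_n(X)|.
Proof.
have -> : (2 * #|'Ldiv_n(X)| = #|setX [set: 'I_2] 'Ldiv_n(X)|)%N.
  by rewrite cardsX cardsT card_ord.
apply/subset_leq_card/subsetP => -[e u].
rewrite !inE expg_pair /= => /andP[Xu /eqP[_ un]].
by rewrite Xu un eqxx.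
Qed.

Lemma card_Ldiv_cyclic (gT : finGroupType) (X : {group gT}) n :
  cyclic X -> 0 < n -> #|'Ldiv_n(X)| <= n.
Proof.
move=> cycX n_gt0; pose Y := Group (group_Ldiv n (cyclic_abelian cycX)).
have sYX : Y \subset X := subsetIl _ _.
have -> : #|'Ldiv_n(X)| = #|Y| by [].
rewrite -(exponent_cyclic (cyclicS sYX cycX)) dvdn_leq // -sub_LdivT.
exact: subsetIr.
Qed.

Lemma card_cycles_cyclic_pgroup (gT : finGroupType) (p : nat) (X : {group gT}) :
  cyclic X -> p.-group X -> #|cycles X| <= (logn p #|X|).+1.
Proof.
move=> cycX pX; rewrite -[X in _ <= X]card_ord.
pose log_ord (C : {set gT}) : 'I_(logn p #|X|).+1 := inord (logn p #|C|).
apply: (@leq_card_in _ _ log_ord) => _ _ /imsetP[x Xx ->] /imsetP[y Xy ->].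
have sXx : <[x]> \subset X by rewrite cycle_subG.
have sXy : <[y]> \subset X by rewrite cycle_subG.
have log_le z : <[z]> \subset X -> logn p #|<[z]>| < (logn p #|X|).+1.
  by move=> sXz; rewrite ltnS dvdn_leq_log ?cardG_gt0 ?cardSg.
move/(congr1 val); rewrite /log_ord /= !inordK ?log_le // => eq_log.
apply/eqP; rewrite (eq_subG_cyclic cycX) // (card_pgroup (pgroupS sXx pX)).
by rewrite (card_pgroup (pgroupS sXy pX)) eq_log.
Qed.

Lemma quaternion_index2_cycle m : (1 < m)%N -> exists x : 'Q_(2 ^ m.+1),
  #[x] = (2 ^ m)%N /\ {in ~: <[x]>, forall q, q ^+ 4 = 1}.
Proof.
move=> m_gt1; have m1_gt2 : 2 < m.+1 by [].
have [[x y] genQ _] :=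
  generators_quaternion (G := [set: 'Q_(2 ^ m.+1)]%G) m1_gt2 (isog_refl _).
have [[_ order4 _] _ _ _ _] := quaternion_structure m1_gt2 genQ (isog_refl _).
case: genQ => _ _ ox _; exists x; split=> // q X'q.
by rewrite -(order4 q) ?expg_order // inE -in_setC X'q inE.
Qed.

Lemma Z2xQ_index2_subgroup m : (1 < m)%N -> exists A : {group Z2xQ m},
  [/\ #|[set: Z2xQ m] : A| = 2, {in ~: A, forall c, c ^+ 4 = 1},
      #|~: A| = (2 ^ m.+1)%N, #|cycles A| <= 2 * m.+1 & #|'Ldiv_16(A)| <= 32].
Proof.
move=> m_gt1; have [x [ox x4]] := quaternion_index2_cycle m_gt1.
exists (setX_group [set: 'I_2]%G <[x]>%G).
have cardA : #|setX [set: 'I_2] <[x]>| = (2 ^ m.+1)%N.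
  by rewrite cardsX cardsT card_ord -orderE ox expnS.
have cardT : #|[set: Z2xQ m]| = (2 ^ m.+2)%N.
  by rewrite cardsT card_prod card_ord -cardsT card_quaternion // expnS.
split=> /=.
- by rewrite -divgS ?subsetT //= cardT cardA expnS mulnK ?expn_gt0.
- move=> [e q]; rewrite in_setC in_setX inE /= => X'q.
  by rewrite expg_pair x4 ?in_setC // -(expg_mod 4 (expg_ord2 e)).
- apply/eqP; rewrite -(eqn_add2l (2 ^ m.+1)) -{1}cardA cardsC -cardsT cardT.
  by rewrite expnS addnn mul2n.
- apply: leq_trans (card_cycles_setX_ord2 _) _; rewrite leq_mul2l /=.
  have pX : 2.-group <[x]> by rewrite /pgroup -orderE ox pnatX pnat_id.
  by have := card_cycles_cyclic_pgroup (cycle_cyclic x) pX; rewrite -orderE ox pfactorK.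
- apply: leq_trans (card_Ldiv_setX_ord2 _ _) _.
  by rewrite (_ : 32 = 2 * 16)%N // leq_mul2l card_Ldiv_cyclic ?cycle_cyclic.
Qed.

Lemma csd_Z2xQ_le m : (1 < m)%N -> (csd (Z2xQ m) <= (4 * m + 68)%:R / (2 ^ m)%:R)%R.
Proof.
move=> /Z2xQ_index2_subgroup[A [indexA expA' cardA' cycles_le Ldiv_le]].
have := permuting_pairs_index2_bound indexA expA'; rewrite cardA' expnS.
have l_gt0 := cyclic_subgroups_gt0 (Z2xQ m).
rewrite csdE ler_pdivrMr ?ltr0n ?expn_gt0 ?l_gt0 // mulrAC.
rewrite ler_pdivlMr ?ltr0n ?expn_gt0 // -!natrM ler_nat.
have := leq_mul (leq_add cycles_le Ldiv_le) (leqnn (#|cyclic_subgroups (Z2xQ m)| ^ 2)).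
nia.
Qed.

Theorem corollary3p5 :
  forall eps : rat, (0 < eps)%R ->
  exists N : nat, forall m : nat, (N <= m)%N -> (`|csd (Z2xQ m)| < eps)%R.
Proof.
move=> eps eps_gt0; have [N small] := affine_div_exp2_lt 4 68 eps_gt0.
exists (maxn 2 N) => m; rewrite geq_max => /andP[m_gt1 m_geN].
rewrite ger0_norm ?divr_ge0 ?ler0n //.
exact: le_lt_trans (csd_Z2xQ_le m_gt1) (small m m_geN).
Qed.
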